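(* Let $\{(x_i,y_i)\}_{i=1}^n$ be a dataset, $\alpha\in(0,1)$, and $g\in(0,1)$. Suppose an (unfair) learner is given which, on input any $w\in\Delta_n$, outputs a deterministic classifier $f$ with $\sum_{i=1}^n w_i\mathbf 1_{\{f(x_i)\neq y_i\}}\le g$. Consider the procedure ''AdaBoost + Average'' with $T$ rounds and step size $\eta>0$: set $w^1=(\frac1n,\dots,\frac1n)$; for $t=1,\dots,T$, feed $w^t$ to the learner, receive $f^t$ with losses $\ell_i^t=\mathbf 1_{\{f^t(x_i)\neq y_i\}}$, and set $w^{t+1}\in\Delta_n$ with $w_i^{t+1}\propto\exp\big(\eta\sum_{s=1}^t\ell_i^s\big)$; finally output the ensemble with model weights $\lambda=(\frac1T,\dots,\frac1T)$. Then there is an absolute constant $C$ such that for every $\delta>0$ and every $T\ge C\frac{\log n}{\delta^2}$, running this procedure with $\eta=\sqrt{8\log n/T}$ yields an ensemble whose training $\alpha$-CVaR zero-one loss $$\max_{w\in\Delta_n,\ w_i\le\frac1{\alpha n}\ \forall i}\ \sum_{i=1}^n w_i\,\frac1T\sum_{t=1}^T\ell_i^t$$ is at most $g+\delta$.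
   Context: $\Delta_n=\{w\in\mathbb R^n:w_i\ge0,\sum_iw_i=1\}$. The ensemble samples a base model uniformly from $f^1,\dots,f^T$ and predicts with it; its $\alpha$-CVaR zero-one loss is the displayed quantity, i.e. the maximum over weightings $w$ with $w_i\le 1/(\alpha n)$ of the weighted average of the per-sample expected zero-one losses. *)

From HB Require Import structures.
From mathcomp Require Import all_boot all_order all_algebra.
From mathcomp Require Import all_classical all_reals all_analysis.
Set Implicit Arguments. Unset Strict Implicit. Unset Printing Implicit Defensive.
Import Order.TTheory GRing.Theory Num.Theory.
Local Open Scope ring_scope.
Local Open Scope classical_set_scope.

Section Defs.
Variable R : realType.

Definition in_simplex (n : nat) (w : 'I_n -> R) : Prop :=
  (forall i, 0 <= w i) /\ \sum_(i < n) w i = 1.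

Definition zo_losses (X : Type) (Y : eqType) (n : nat)
  (x : 'I_n -> X) (y : 'I_n -> Y) (f : X -> Y) : 'I_n -> R :=
  fun i => ((f (x i) != y i) : nat)%:R.

Definition exp_weights (n : nat) (eta : R) (c : 'I_n -> R) : 'I_n -> R :=
  fun i => expR (eta * c i) / \sum_(j < n) expR (eta * c j).

(* cumulative losses sum_{s <= t} l^s_i of "AdaBoost" run with the learner;
   at round t+1 the learner receives exp_weights eta (cum_loss t)
   (for t = 0 this is the uniform vector w^1) *)
Fixpoint cum_loss (X : Type) (Y : eqType) (n : nat)
  (x : 'I_n -> X) (y : 'I_n -> Y) (learner : ('I_n -> R) -> X -> Y)
  (eta : R) (t : nat) : 'I_n -> R :=
  match t with
  | 0 => fun _ => 0
  | t'.+1 =>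
      let c := cum_loss x y learner eta t' in
      fun i => c i + zo_losses x y (learner (exp_weights eta c)) i
  end.

(* the base model f^{t+1} produced at round t+1 *)
Definition boost_model (X : Type) (Y : eqType) (n : nat)
  (x : 'I_n -> X) (y : 'I_n -> Y) (learner : ('I_n -> R) -> X -> Y)
  (eta : R) (t : nat) : X -> Y :=
  learner (exp_weights eta (cum_loss x y learner eta t)).

Definition ensemble_loss (X : Type) (Y : eqType) (n : nat)
  (x : 'I_n -> X) (y : 'I_n -> Y) (learner : ('I_n -> R) -> X -> Y)
  (eta : R) (T : nat) : 'I_n -> R :=
  fun i => T%:R^-1 * \sum_(t < T) zo_losses x y (boost_model x y learner eta t) i.

Definition cvar (n : nat) (alpha : R) (a : 'I_n -> R) : R :=
  sup [set s : R | exists w : 'I_n -> R,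
        [/\ in_simplex w, (forall i, w i <= (alpha * n%:R)^-1) &
            s = \sum_(i < n) w i * a i]].

End Defs.
Arguments zo_losses {R X Y n}.
Arguments exp_weights {R n}.
Arguments cum_loss {R X Y n}.
Arguments boost_model {R X Y n}.
Arguments ensemble_loss {R X Y n}.
Arguments in_simplex {R n}.
Arguments cvar {R n}.

From HB Require Import structures.
From mathcomp Require Import all_boot all_order all_algebra.
From mathcomp Require Import all_classical all_reals all_analysis.
From mathcomp Require Import ring lra zify.
Import Order.TTheory GRing.Theory Num.Theory.
Local Open Scope ring_scope.

(** The run is Hedge (exponential weights) with the per-sample losses as
    gains: the potential [\sum_i expR (eta * L_i)] of the cumulative losses
    [L_i] grows by a factor at most [expR (g * (expR eta - 1))] per round,
    because the learner's weighted loss under the current weights is at most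
    [g].  Comparing one term with the whole potential gives
    [L_i / T <= g + ln n / (eta * T) + 2 * eta], and the step size
    [eta = sqrt (8 ln n / T)] makes the last two terms at most [delta].
    Since the CVaR is a weighted average of the per-sample ensemble losses,
    it inherits the bound. *)

Lemma cvar_le {R : realType} (n : nat) (alpha M : R) (a : 'I_n -> R) :
  0 <= M -> (forall i, a i <= M) -> cvar alpha a <= M.
Proof.
move=> M_ge0 a_le; rewrite /cvar; set S := (X in sup X).
have [->|S_neq0] := eqVneq S set0; first by rewrite sup0.
apply: ge_sup; first exact/set0P.
move=> _ [w [[w_ge0 w_sum1] _ ->]].
apply: (@le_trans _ _ (\sum_(i < n) w i * M)).
  by apply: ler_sum => i _; apply: ler_wpM2l.
by rewrite -mulr_suml w_sum1 mul1r.
Qed.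

Lemma sumr_expR_gt0 {R : realType} {n : nat} (c : 'I_n -> R) :
  (0 < n)%N -> 0 < \sum_(j < n) expR (c j).
Proof.
case: n c => [//|n] c _; rewrite big_ord_recl.
by apply: ltr_pwDl; [exact: expR_gt0 | apply: sumr_ge0 => j _; exact/ltW/expR_gt0].
Qed.

Lemma exp_weights_simplex {R : realType} {n : nat} (eta : R) (c : 'I_n -> R) :
  (0 < n)%N -> in_simplex (exp_weights eta c).
Proof.
move=> n_gt0; have Z_gt0 := sumr_expR_gt0 (fun j => eta * c j) n_gt0.
split=> [i|]; first by rewrite divr_ge0 // ltW // expR_gt0.
by rewrite -mulr_suml mulfV // gt_eqF.
Qed.

Lemma expR_sub1_le {R : realType} (e : R) :
  0 <= e -> e <= 1 / 2 -> expR e - 1 <= e + 2 * e ^+ 2.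
Proof.
move=> e_ge0 e_le_half.
have expRe_gt0 := expR_gt0 e.
have : (1 - e) * expR e <= 1.
  have := expR_ge1Dx (- e); rewrite expRN => h.
  by rewrite -(ler_pdivlMr _ _ expRe_gt0) div1r; lra.
have : 0 <= e ^+ 2 * (1 - 2 * e) by apply: mulr_ge0; [exact: sqr_ge0 | lra].
nra.
Qed.

Lemma tuned_step_size {R : realType} (l T delta : R) :
  0 < l -> 0 < delta < 1 -> 40 * l / delta ^+ 2 <= T ->
  let eta := Num.sqrt (8 * l / T) in
  0 < eta <= 1 / 2 /\ l / (eta * T) + 2 * eta <= delta.
Proof.
move=> l_gt0 /andP[delta_gt0 delta_lt1]; rewrite ler_pdivrMr ?exprn_gt0 // => lT eta.
have T_gt0 : 0 < T by nra.
have eta2 : eta ^+ 2 = 8 * l / T by rewrite sqr_sqrtr // divr_ge0 // ltW // mulr_gt0.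
have eta_gt0 : 0 < eta by rewrite sqrtr_gt0 divr_gt0 // mulr_gt0.
have eta2T : eta ^+ 2 * T = 8 * l by rewrite eta2 divfK // gt_eqF.
have eta2_le : 5 * eta ^+ 2 <= delta ^+ 2 by nra.
have -> : l / (eta * T) = eta / 8.
  have -> : l = eta ^+ 2 * T / 8 by rewrite eta2T mulrAC divff ?mul1r.
  by field; rewrite ?gt_eqF.
split; [apply/andP; split => //; nra | nra].
Qed.

Section Boosting.
Variables (R : realType) (X : Type) (Y : eqType) (n : nat).
Variables (x : 'I_n -> X) (y : 'I_n -> Y) (learner : ('I_n -> R) -> X -> Y).

Local Notation loss f := (zo_losses x y f : 'I_n -> R).
Local Notation cum_loss := (cum_loss x y learner).
Local Notation boost_model := (boost_model x y learner).
Local Notation ensemble_loss := (ensemble_loss x y learner).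

Lemma zo_losses01 f i : loss f i = 0 \/ loss f i = 1.
Proof. by rewrite /zo_losses; case: (f (x i) != y i); [right | left]. Qed.

Lemma zo_losses_le1 f i : loss f i <= 1.
Proof. by case: (zo_losses01 f i) => ->. Qed.

Lemma cum_lossE eta T i :
  cum_loss eta T i = \sum_(t < T) loss (boost_model eta t) i.
Proof. by elim: T => [|T IH]; rewrite ?big_ord0 // big_ord_recr /= IH. Qed.

Lemma ensemble_lossE eta T i : ensemble_loss eta T i = cum_loss eta T i / T%:R.
Proof. by rewrite /ensemble_loss cum_lossE mulrC. Qed.

Lemma ensemble_loss_le eta T i (b : R) :
  0 <= b -> (forall t, loss (boost_model eta t) i <= b) -> ensemble_loss eta T i <= b.
Proof.
move=> b_ge0 loss_le; rewrite /ensemble_loss.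
have [->|T_gt0] := posnP T; first by rewrite invr0 mul0r.
rewrite ler_pdivrMl ?ltr0n // mulrC.
rewrite mulr_natr -[T in b *+ T]card_ord -sumr_const.
by apply: ler_sum => t _; exact: loss_le.
Qed.

Variable g : R.
Hypothesis learner_weak : forall w : 'I_n -> R, in_simplex w ->
  \sum_(i < n) w i * loss (learner w) i <= g.
Hypothesis n_gt0 : (0 < n)%N.

Lemma zo_losses_le_single w i : (n <= 1)%N -> in_simplex w -> loss (learner w) i <= g.
Proof.
move=> n_le1 w_simplex; have := learner_weak _ w_simplex.
have only_i (j : 'I_n) : j = i by apply: ord_inj; move: (ltn_ord i) (ltn_ord j); lia.
have w_i : w i = 1.
  by case: w_simplex => _; rewrite (bigD1 i) //= big1 ?addr0 // => j; rewrite (only_i j) eqxx.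
by rewrite (bigD1 i) //= big1 ?addr0 ?w_i ?mul1r // => j; rewrite (only_i j) eqxx.
Qed.

Definition potential eta T := \sum_(i < n) expR (eta * cum_loss eta T i).

Lemma potentialS_le eta T : 0 <= eta ->
  potential eta T.+1 <= potential eta T * expR (g * (expR eta - 1)).
Proof.
move=> eta_ge0; rewrite /potential /=.
set c := cum_loss eta T; set P := \sum_(i < n) expR (eta * c i).
set w := exp_weights eta c; set l := loss (learner w).
have P_gt0 : 0 < P by exact: sumr_expR_gt0.
(* exact because [l i] is 0 or 1 *)
have expR_step i :
    expR (eta * (c i + l i)) = expR (eta * c i) + (expR eta - 1) * (P * (w i * l i)).
  rewrite /w /exp_weights -/P [P * (_ * _)]mulrA [P * _]mulrC divfK ?gt_eqF // mulrDr expRD.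
  by have [->|->] : l i = 0 \/ l i = 1 := zo_losses01 _ i; rewrite ?mulr0 ?mulr1 ?expR0; lra.
rewrite (eq_bigr _ (fun i _ => expR_step i)) big_split /= -mulr_sumr -mulr_sumr -/P.
have e1_ge0 : 0 <= expR eta - 1 by rewrite subr_ge0 -expR0 ler_expR.
apply: (@le_trans _ _ (P * (1 + g * (expR eta - 1)))); last first.
  by apply: ler_wpM2l; [exact: ltW | exact: expR_ge1Dx].
rewrite mulrDr mulr1 lerD2l mulrCA ler_pM2l // [g * _]mulrC; apply: ler_wpM2l => //.
exact: learner_weak (exp_weights_simplex eta c n_gt0).
Qed.

Lemma potential_le eta T : 0 <= eta ->
  potential eta T <= n%:R * expR (T%:R * (g * (expR eta - 1))).
Proof.
move=> eta_ge0; elim: T => [|T IH].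
  rewrite mul0r expR0 mulr1 /potential /=.
  by under eq_bigr do rewrite mulr0 expR0; rewrite sumr_const card_ord.
apply: le_trans (potentialS_le _ T eta_ge0) _.
by rewrite -addn1 natrD mulrDl mul1r expRD mulrA ler_wpM2r // ltW // expR_gt0.
Qed.

Lemma cum_loss_regret eta T i : 0 <= eta ->
  eta * cum_loss eta T i <= ln n%:R + T%:R * (g * (expR eta - 1)).
Proof.
move=> eta_ge0; rewrite -ler_expR expRD lnK ?posrE ?ltr0n //.
apply: le_trans (potential_le _ T eta_ge0); rewrite /potential (bigD1 i) //= lerDl.
by apply: sumr_ge0 => j _; exact/ltW/expR_gt0.
Qed.

Lemma ensemble_loss_hedge eta T i : 0 <= g <= 1 -> 0 < eta <= 1 / 2 -> (0 < T)%N ->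
  ensemble_loss eta T i <= g + ln n%:R / (eta * T%:R) + 2 * eta.
Proof.
move=> /andP[g_ge0 g_le1] /andP[eta_gt0 eta_le_half] T_gt0.
have T_gt0' : 0 < T%:R :> R by rewrite ltr0n.
rewrite ensemble_lossE ler_pdivrMr // -(ler_pM2l eta_gt0).
apply: le_trans (cum_loss_regret _ T i (ltW eta_gt0)) _.
have -> : eta * ((g + ln n%:R / (eta * T%:R) + 2 * eta) * T%:R) =
          ln n%:R + T%:R * (g * eta + 2 * eta ^+ 2).
  by field; rewrite ?gt_eqF.
rewrite lerD2l; apply: ler_wpM2l; first exact: ltW.
have := expR_sub1_le _ (ltW eta_gt0) eta_le_half.
have : 0 <= eta ^+ 2 by exact: sqr_ge0.
nra.
Qed.

Lemma ensemble_loss_tuned_le delta T i : 0 < g < 1 -> 0 < delta ->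
  40 * ln n%:R / delta ^+ 2 <= T%:R ->
  ensemble_loss (Num.sqrt (8 * ln n%:R / T%:R)) T i <= g + delta.
Proof.
move=> /andP[g_gt0 g_lt1] delta_gt0 T_large.
(* for a single sample [ln n = 0], so [eta = 0] and the potential says nothing *)
have [n_le1 | n_gt1] := leqP n 1.
  apply: le_trans (_ : g <= g + delta); last lra.
  apply: ensemble_loss_le => [|t]; first exact: ltW.
  exact: zo_losses_le_single (exp_weights_simplex _ _ n_gt0).
have [delta_ge1 | delta_lt1] := leP 1 delta.
  apply: le_trans (_ : 1 <= g + delta); last lra.
  by apply: ensemble_loss_le => // t; exact: zo_losses_le1.
have ln_gt0 : 0 < ln n%:R :> R by rewrite ln_gt0 // ltr1n.
have delta_bounds : 0 < delta < 1 by apply/andP.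
have [eta_bounds step_le] := tuned_step_size _ _ _ ln_gt0 delta_bounds T_large.
have T_gt0 : (0 < T)%N.
  by rewrite -(ltr0n R); apply: lt_le_trans T_large; rewrite divr_gt0 ?exprn_gt0 ?mulr_gt0.
have g_bounds : 0 <= g <= 1 by rewrite !ltW.
apply: le_trans (ensemble_loss_hedge _ _ i g_bounds eta_bounds T_gt0) _.
lra.
Qed.

End Boosting.

Theorem theorem2 (R : realType) :
  exists C : R,
  forall (X : Type) (Y : eqType) (n : nat) (x : 'I_n -> X) (y : 'I_n -> Y)
    (alpha g : R) (learner : ('I_n -> R) -> X -> Y),
    (0 < n)%N -> 0 < alpha < 1 -> 0 < g < 1 ->
    (forall w : 'I_n -> R, in_simplex w ->
       \sum_(i < n) w i * zo_losses x y (learner w) i <= g) ->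
    forall (delta : R) (T : nat), 0 < delta ->
      C * ln (n%:R) / delta ^+ 2 <= T%:R ->
      cvar alpha (ensemble_loss x y learner (Num.sqrt (8 * ln (n%:R) / T%:R)) T)
        <= g + delta.
Proof.
exists 40 => X Y n x y alpha g learner n_gt0 _ g_bounds learner_weak delta T delta_gt0 T_large.
apply: cvar_le => [|i]; first by case/andP: g_bounds => g_gt0 _; rewrite addr_ge0 ?ltW.
exact: ensemble_loss_tuned_le.
Qed.
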